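(* Let $m>0$, $\alpha>0$ and $\omega\ge 0$, and let $(\phi(t),\gamma(t),k(t))_{t\ge0}$ be a trajectory of the dynamical system \[ \frac{d\phi}{dt}=\gamma,\qquad \frac{d\gamma}{dt}=\frac{1}{m}\bigl(-\gamma+\omega-k\sin\phi\bigr),\qquad \frac{dk}{dt}=\alpha\cos\phi-k, \] with initial condition $(\phi(0),\gamma(0),k(0))=(\phi_0,\gamma_0,k_0)$, where $\phi$ is an angle (taken modulo $2\pi$ in $[-\pi,\pi)$) and $\gamma,k\in\mathbb{R}$. Then for every $\epsilon>0$ there exists a time $T_\epsilon\ge 0$ such that $|k(t)|\le \alpha+\epsilon$ and $|\gamma(t)|\le \omega+\alpha+\epsilon$ for all $t\ge T_\epsilon$.
   Context: This system describes the phase difference $\phi$, its derivative $\gamma$, and the (rescaled) adaptive coupling strength $k$ of two identical-mass Kuramoto oscillators with inertia and Hebbian learning; $m$ is the (rescaled) mass, $\alpha$ the learning enhancement factor, and $\omega$ the intrinsic-frequency difference (the paper assumes $\omega\ge 0$ throughout). *)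

From Stdlib Require Import Reals.
Open Scope R_scope.

Definition right_cont_at0 (f : R -> R) : Prop :=
  forall eps, 0 < eps -> exists delta, 0 < delta /\
    forall t, 0 <= t < delta -> Rabs (f t - f 0) < eps.

Definition is_trajectory (m alpha omega : R) (phi gamma k : R -> R) : Prop :=
  (forall t, 0 < t ->
     derivable_pt_lim phi t (gamma t) /\
     derivable_pt_lim gamma t ((- gamma t + omega - k t * sin (phi t)) / m) /\
     derivable_pt_lim k t (alpha * cos (phi t) - k t)) /\
  right_cont_at0 phi /\ right_cont_at0 gamma /\ right_cont_at0 k.

(** The learning rule is a linear relaxation [k' = -k + alpha cos phi] driven
    by a forcing of size at most [alpha], so [k] is eventually within [eps] of
    the ball of radius [alpha].  Once that holds, the velocity equation
    [m gamma' = -gamma + (omega - k sin phi)] is again a linear relaxation, now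
    with rate [1/m] and forcing bounded by [omega + alpha + eps/2]. *)

From Stdlib Require Import Reals Lra Psatz.
Open Scope R_scope.

Lemma nonincreasing_of_derive_nonpos (h dh : R -> R) (s : R) :
  (forall x, s <= x -> derivable_pt_lim h x (dh x)) ->
  (forall x, s <= x -> dh x <= 0) ->
  forall t, s <= t -> h t <= h s.
Proof.
  intros h_deriv dh_nonpos t st.
  destruct (Req_dec t s) as [-> | t_neq_s]; [lra |].
  destruct (MVT_cor2 h dh s t) as [c [h_diff c_between]]; [lra | |].
  - intros x x_between; apply h_deriv; lra.
  - assert (dh c <= 0) by (apply dh_nonpos; lra); nra.
Qed.

(* [exp (a t) (f t - B)] is nonincreasing. *)
Lemma relaxation_upper_bound (f df : R -> R) (a B s : R) :
  0 < a ->
  (forall t, s <= t -> derivable_pt_lim f t (df t)) ->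
  (forall t, s <= t -> df t <= - a * (f t - B)) ->
  forall t, s <= t -> f t - B <= exp (- (a * (t - s))) * (f s - B).
Proof.
  intros a_pos f_deriv df_le t st.
  set (h x := exp (a * x) * (f x - B)).
  assert (h_deriv : forall x, s <= x ->
            derivable_pt_lim h x (exp (a * x) * a * (f x - B) + exp (a * x) * df x)).
  { intros x sx; apply (derivable_pt_lim_mult (fun y => exp (a * y)) (fun y => f y - B)).
    - apply (derivable_pt_lim_comp (fun y => a * y) exp x a).
      + assert (lin := derivable_pt_lim_scal id a x 1 (derivable_pt_lim_id x)).
        rewrite Rmult_1_r in lin; exact lin.
      + apply derivable_pt_lim_exp.
    - rewrite <- (Rminus_0_r (df x)).
      apply derivable_pt_lim_minus; [now apply f_deriv | apply derivable_pt_lim_const]. }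
  assert (h_le : h t <= h s).
  { apply (nonincreasing_of_derive_nonpos h _ s h_deriv); [| exact st].
    intros x sx; specialize (df_le x sx); pose proof (exp_pos (a * x)); nra. }
  unfold h in h_le.
  assert (exp_split : exp (a * s) = exp (- (a * (t - s))) * exp (a * t))
    by (rewrite <- exp_plus; f_equal; ring).
  rewrite exp_split in h_le.
  pose proof (exp_pos (a * t)); nra.
Qed.

Lemma exp_decay_le (a s C eps : R) :
  0 < a -> 0 <= C -> 0 < eps ->
  forall t, s + C / (a * eps) <= t -> exp (- (a * (t - s))) * C <= eps.
Proof.
  intros a_pos C_ge0 eps_pos t t_large.
  set (x := a * (t - s)).
  assert (C_le : C <= eps * x).
  { unfold x; apply (Rmult_le_compat_l (a * eps)) in t_large; [| nra].
    replace (a * eps * (s + C / (a * eps))) with (a * eps * s + C) in t_large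
      by (field; lra).
    nra. }
  rewrite exp_Ropp.
  pose proof (exp_ineq1_le x); pose proof (exp_pos x).
  apply (Rmult_le_reg_l (exp x)); [lra |].
  rewrite <- Rmult_assoc, Rinv_r, Rmult_1_l; nra.
Qed.

(* The forcing hypothesis says [f' = -a f + a u] with [|u| <= B]. *)
Lemma relaxation_eventually_bounded (f df : R -> R) (a B s : R) :
  0 < a ->
  (forall t, s <= t -> derivable_pt_lim f t (df t)) ->
  (forall t, s <= t -> Rabs (df t + a * f t) <= a * B) ->
  forall eps, 0 < eps -> exists T, s <= T /\
    forall t, T <= t -> Rabs (f t) <= B + eps.
Proof.
  intros a_pos f_deriv forcing_le eps eps_pos.
  assert (B_ge0 : 0 <= B).
  { specialize (forcing_le s (Rle_refl s)).
    pose proof (Rabs_pos (df s + a * f s)); nra. }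
  assert (decay : forall t, s + Rabs (f s) / (a * eps) <= t ->
            exp (- (a * (t - s))) * Rabs (f s) <= eps)
    by (apply exp_decay_le; auto using Rabs_pos).
  assert (ratio_ge0 : 0 <= Rabs (f s) / (a * eps)).
  { apply Rmult_le_pos; [apply Rabs_pos |].
    apply Rlt_le, Rinv_0_lt_compat; nra. }
  exists (s + Rabs (f s) / (a * eps)); split; [lra |].
  intros t t_large.
  assert (st : s <= t) by lra.
  assert (upper := relaxation_upper_bound f df a B s a_pos f_deriv
    (fun x sx => ltac:(specialize (forcing_le x sx); split_Rabs; lra)) t st).
  assert (lower := relaxation_upper_bound (fun x => - f x) (fun x => - df x) a B s a_pos
    (fun x sx => derivable_pt_lim_opp f x (df x) (f_deriv x sx))
    (fun x sx => ltac:(specialize (forcing_le x sx); split_Rabs; lra)) t st).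
  specialize (decay t t_large).
  pose proof (exp_pos (- (a * (t - s)))).
  apply Rabs_le; split_Rabs; nra.
Qed.

Lemma learning_forcing_le (alpha x c : R) :
  0 < alpha -> Rabs (alpha * cos x - c + 1 * c) <= 1 * alpha.
Proof.
  intros alpha_pos.
  replace (alpha * cos x - c + 1 * c) with (alpha * cos x) by ring.
  rewrite Rabs_mult, (Rabs_pos_eq alpha), Rmult_1_l by lra.
  pose proof (COS_bound x).
  rewrite <- (Rmult_1_r alpha) at 2.
  apply Rmult_le_compat_l; [lra | apply Rabs_le; lra].
Qed.

Lemma velocity_forcing_le (m omega x g c K : R) :
  0 < m -> 0 <= omega -> Rabs c <= K ->
  Rabs ((- g + omega - c * sin x) / m + / m * g) <= / m * (omega + K).
Proof.
  intros m_pos omega_ge0 c_le.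
  pose proof (Rinv_0_lt_compat m m_pos) as inv_m_pos.
  replace ((- g + omega - c * sin x) / m + / m * g)
    with (/ m * (omega - c * sin x)) by (field; lra).
  rewrite Rabs_mult, (Rabs_pos_eq (/ m)) by lra.
  apply Rmult_le_compat_l; [lra |].
  pose proof (SIN_bound x).
  split_Rabs; nra.
Qed.

Theorem theorem1 (m alpha omega phi0 gamma0 k0 : R) (phi gamma k : R -> R) :
  0 < m -> 0 < alpha -> 0 <= omega ->
  is_trajectory m alpha omega phi gamma k ->
  phi 0 = phi0 -> gamma 0 = gamma0 -> k 0 = k0 ->
  forall eps, 0 < eps -> exists T, 0 <= T /\
    forall t, T <= t -> Rabs (k t) <= alpha + eps /\ Rabs (gamma t) <= omega + alpha + eps.
Proof.
  intros m_pos alpha_pos omega_ge0 [odes _] _ _ _ eps eps_pos.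
  (* The equations hold only for [t > 0]; the relaxation lemmas are applied
     from time [1] on. *)
  assert (k_deriv : forall t, 1 <= t ->
            derivable_pt_lim k t (alpha * cos (phi t) - k t))
    by (intros t t1; destruct (odes t) as (_ & _ & dk); [lra | exact dk]).
  destruct (relaxation_eventually_bounded k _ 1 alpha 1 Rlt_0_1 k_deriv
              (fun t _ => learning_forcing_le alpha (phi t) (k t) alpha_pos)
              (eps / 2) ltac:(lra)) as [Tk [Tk_ge1 k_bound]].
  assert (gamma_deriv : forall t, Tk <= t ->
            derivable_pt_lim gamma t ((- gamma t + omega - k t * sin (phi t)) / m))
    by (intros t tk; destruct (odes t) as (_ & dg & _); [lra | exact dg]).
  destruct (relaxation_eventually_bounded gamma _ (/ m) (omega + (alpha + eps / 2)) Tk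
              (Rinv_0_lt_compat m m_pos) gamma_deriv
              (fun t tk => velocity_forcing_le m omega (phi t) (gamma t) (k t) _
                             m_pos omega_ge0 (k_bound t tk))
              (eps / 2) ltac:(lra)) as [T [Tk_le_T gamma_bound]].
  exists T; split; [lra |].
  intros t Tt; split.
  - specialize (k_bound t ltac:(lra)); lra.
  - specialize (gamma_bound t Tt); lra.
Qed.
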